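(* The set $\bigcup_{p=0}^\infty Y_p$ is dense in $\mathbb R$, where $Y_p=\{z\in\mathbb C:\psi^{\circ p}(z)=0\}$ (so $Y_0=\{0\}$, $Y_1=\{-1,1\}$, $Y_2=\{(\pm1\pm\sqrt5)/2\}$, ...). Each $Y_p$ consists of $2^p$ real numbers.
   Context: $\psi(z)=z-1/z$, viewed as a rational map of the Riemann sphere, and $\psi^{\circ p}$ is its $p$-fold composition ($\psi^{\circ0}(z)=z$). *)

From HB Require Import structures.
From mathcomp Require Import all_boot all_order all_algebra.
From mathcomp Require Import all_classical all_reals all_analysis.
From mathcomp Require Import complex.
Set Implicit Arguments. Unset Strict Implicit. Unset Printing Implicit Defensive.
Import Order.TTheory GRing.Theory Num.Theory.
Local Open Scope ring_scope.

(* The Riemann sphere over C = R[i] is modelled as [option R[i]],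
   with [None] the point at infinity. *)
Definition psi {R : rcfType} (w : option R[i]) : option R[i] :=
  match w with
  | None => None
  | Some z => if z == 0 then None
              else Some (z - z^-1)
  end.

Definition psi_iter {R : rcfType} (p : nat) (w : option R[i]) : option R[i] :=
  iter p psi w.

Definition Y {R : rcfType} (p : nat) : R[i] -> Prop :=
  fun z => psi_iter p (Some z) = Some 0.

From HB Require Import structures.
From mathcomp Require Import all_boot all_order all_algebra.
From mathcomp Require Import all_classical all_reals all_analysis.
From mathcomp Require Import complex.
From mathcomp Require Import ring lra.
Set Implicit Arguments. Unset Strict Implicit. Unset Printing Implicit Defensive.
Import Order.TTheory GRing.Theory Num.Theory numFieldNormedType.Exports.
Local Open Scope ring_scope.
Local Open Scope classical_set_scope.

(* A real y has exactly two preimages under z |-> z - 1/z, the roots of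
   w^2 - y w - 1, one positive and one negative; pulling back from 0 gives the
   2^p real points of Y_p.  For density, follow the images [A_n, B_n] of an
   interval [a, b] under psi: while they avoid 0, psi is increasing on them,
   and their length L and endpoint product P satisfy L' = L (1 + 1/P) and
   P' = ((P - 1)^2 - L^2) / P.  Then P drops by 1 whenever P >= 1 or L >= 1,
   and L grows by at least L_0 whenever P < 1, so P cannot stay positive:
   some [A_n, B_n] contains 0, and 0 pulls back along the monotone branches to
   a point of some Y_p inside [a, b]. *)

(* psi on the finite plane; at 0 it takes the junk value 0 - 0^-1 = 0,
   whereas psi sends 0 to infinity. *)
Definition psi_fin {F : fieldType} (z : F) : F := z - z^-1.

Section PsiField.
Variable F : fieldType.
Implicit Types a b z : F.

Lemma psi_fin_eq_roots a b z : a * b = -1 ->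
  (z != 0 /\ psi_fin z = a + b) <-> (z = a \/ z = b).
Proof.
move=> ab.
have factor_psi w : w != 0 -> (psi_fin w == a + b) = ((w - a) * (w - b) == 0).
  move=> w0; have -> : (w - a) * (w - b) = w * (psi_fin w - (a + b)).
    have -> : (w - a) * (w - b) = w ^+ 2 - (a + b) * w + a * b by ring.
    by rewrite ab /psi_fin; field.
  by rewrite mulf_eq0 (negbTE w0) subr_eq0.
split => [[z0 /eqP]|za].
  by rewrite factor_psi // mulf_eq0 !subr_eq0 => /orP[]/eqP; [left|right].
have z0 : z != 0.
  by case: za => -> //; apply: contra_eq_neq ab => ->;
    rewrite ?(mul0r, mulr0) eq_sym oppr_eq0 oner_eq0.
split=> //; apply/eqP; rewrite factor_psi // mulf_eq0 !subr_eq0.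
by case: za => ->; rewrite eqxx ?orbT.
Qed.

Lemma psi_finB a b : a != 0 -> b != 0 ->
  psi_fin b - psi_fin a = (b - a) * (1 + (a * b)^-1).
Proof. by move=> a0 b0; rewrite /psi_fin; field; rewrite a0 b0. Qed.

Lemma psi_finM a b : a != 0 -> b != 0 ->
  psi_fin a * psi_fin b = ((a * b - 1) ^+ 2 - (b - a) ^+ 2) / (a * b).
Proof. by move=> a0 b0; rewrite /psi_fin; field; rewrite a0 b0. Qed.

End PsiField.

Lemma rmorph_psi_fin (F K : fieldType) (f : {rmorphism F -> K}) (z : F) :
  f (psi_fin z) = psi_fin (f z).
Proof. by rewrite /psi_fin rmorphB fmorphV. Qed.

Lemma psi_iter_None {R : rcfType} p : psi_iter p (None : option R[i]) = None.
Proof. by elim: p => //= p; rewrite /psi_iter /= => ->. Qed.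

Lemma Y0 {R : rcfType} (z : R[i]) : Y 0 z <-> z = 0.
Proof. by rewrite /Y /psi_iter; split=> [[]|->]. Qed.

Lemma YS {R : rcfType} p (z : R[i]) : Y p.+1 z <-> z != 0 /\ Y p (psi_fin z).
Proof.
rewrite /Y /psi_iter iterSr /=; case: eqP => [_|/eqP z0] /=.
  by rewrite -/(psi_iter p None) psi_iter_None; split => // -[].
by split => [->|[]].
Qed.

Section PsiRoots.
Variable R : rcfType.
Implicit Types x y : R.

Definition psi_root_pos y : R := (y + Num.sqrt (y ^+ 2 + 4)) / 2.
Definition psi_root_neg y : R := (y - Num.sqrt (y ^+ 2 + 4)) / 2.

Lemma psi_rootsD y : psi_root_pos y + psi_root_neg y = y.
Proof. by rewrite /psi_root_pos /psi_root_neg; field. Qed.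

Lemma psi_rootsM y : psi_root_pos y * psi_root_neg y = -1.
Proof.
have sqrt_sq : Num.sqrt (y ^+ 2 + 4) ^+ 2 = y ^+ 2 + 4.
  by rewrite sqr_sqrtr // addr_ge0 ?sqr_ge0.
rewrite /psi_root_pos /psi_root_neg.
have -> : (y + Num.sqrt (y ^+ 2 + 4)) / 2 * ((y - Num.sqrt (y ^+ 2 + 4)) / 2)
  = (y ^+ 2 - Num.sqrt (y ^+ 2 + 4) ^+ 2) / 4 by field.
by rewrite sqrt_sq; field.
Qed.

Lemma psi_root_pos_gt0 y : 0 < psi_root_pos y.
Proof.
have : `|y| < Num.sqrt (y ^+ 2 + 4).
  rewrite -(@ltr_pXn2r _ 2) ?nnegrE ?sqrtr_ge0 // sqr_sqrtr ?addr_ge0 ?sqr_ge0 //.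
  by rewrite real_normK ?num_real // ltrDl.
have := ler_norm (- y); rewrite normrN => ? ?.
by rewrite /psi_root_pos divr_gt0 //; lra.
Qed.

Lemma psi_root_neg_lt0 y : psi_root_neg y < 0.
Proof. by have := psi_rootsM y; have := psi_root_pos_gt0 y; nra. Qed.

Lemma psi_fin_root_pos y : psi_fin (psi_root_pos y) = y.
Proof.
by have [_ ->] := (psi_fin_eq_roots _ (psi_rootsM y)).2 (or_introl erefl);
  rewrite psi_rootsD.
Qed.

Lemma psi_fin_root_neg y : psi_fin (psi_root_neg y) = y.
Proof.
by have [_ ->] := (psi_fin_eq_roots _ (psi_rootsM y)).2 (or_intror erefl);
  rewrite psi_rootsD.
Qed.

Lemma psi_fin_preimC y (z : R[i]) :
  (z != 0 /\ psi_fin z = (y%:C)%C) <->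
  (z = ((psi_root_pos y)%:C)%C \/ z = ((psi_root_neg y)%:C)%C).
Proof.
rewrite -[in X in psi_fin z = X](psi_rootsD y) rmorphD.
by apply: psi_fin_eq_roots; rewrite -rmorphM psi_rootsM rmorphN rmorph1.
Qed.

Lemma YS_real p x : Y p.+1 (x%:C)%C <-> x != 0 /\ Y p ((psi_fin x)%:C)%C.
Proof. by rewrite YS (inj_eq (@complexI R)) -rmorph_psi_fin. Qed.

Fixpoint psi_zeros p : seq R :=
  if p is p.+1
  then map psi_root_pos (psi_zeros p) ++ map psi_root_neg (psi_zeros p)
  else [:: 0].

Lemma size_psi_zeros p : size (psi_zeros p) = (2 ^ p)%N.
Proof. by elim: p => //= p IH; rewrite size_cat !size_map IH expnS mul2n addnn. Qed.

Lemma psi_zeros_uniq p : uniq (psi_zeros p).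
Proof.
elim: p => //= p IH.
rewrite cat_uniq !map_inj_uniq ?IH //=; last 2 first.
- exact: can_inj psi_fin_root_neg.
- exact: can_inj psi_fin_root_pos.
rewrite andbT; apply/hasPn => _ /mapP[a _ ->]; apply/mapP => -[b _ E].
by have := psi_root_pos_gt0 b; have := psi_root_neg_lt0 a; rewrite E; lra.
Qed.

Lemma Y_psi_zeros p (z : R[i]) :
  Y p z <-> exists2 x, x \in psi_zeros p & z = (x%:C)%C.
Proof.
elim: p z => [|p IH] z.
  rewrite Y0; split=> [->|[x]]; first by exists 0; rewrite ?inE.
  by rewrite inE => /eqP -> ->.
rewrite YS; split.
  case=> z0 /IH[y ys /(conj z0)/psi_fin_preimC[]->].
    by exists (psi_root_pos y); rewrite // mem_cat map_f.
  by exists (psi_root_neg y); rewrite // mem_cat map_f ?orbT.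
case=> x; rewrite mem_cat => /orP[]/mapP[y ys ->] ->.
  have [z0 ->] := (psi_fin_preimC y _).2 (or_introl erefl).
  by split=> //; apply/IH; exists y.
have [z0 ->] := (psi_fin_preimC y _).2 (or_intror erefl).
by split=> //; apply/IH; exists y.
Qed.

End PsiRoots.

Section IntervalEscape.
Variable R : archiFieldType.

Lemma no_unit_descent (u : nat -> R) n : (forall k, 0 < u k) ->
  ~ (forall k, (n <= k)%N -> u k.+1 <= u k - 1).
Proof.
move=> u_gt0 u_desc.
have u_le k : u (k + n)%N <= u n - k%:R.
  elim: k => [|k IH]; first by rewrite add0n subr0.
  by rewrite addSn -natr1; have := u_desc (k + n)%N (leq_addl _ _); lra.
have := u_le (Num.bound (u n)); have := u_gt0 (Num.bound (u n) + n)%N.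
have := archi_boundP (ltW (u_gt0 n)); lra.
Qed.

(* P n and L n stand for the endpoint product and the length of the n-th image
   of an interval avoiding 0; compare psi_finM and psi_finB. *)
Variables P L : nat -> R.
Hypotheses (P_gt0 : forall n, 0 < P n) (L_gt0 : forall n, 0 < L n).
Hypothesis LS : forall n, L n.+1 = L n * (1 + (P n)^-1).
Hypothesis PS : forall n, P n.+1 = ((P n - 1) ^+ 2 - L n ^+ 2) / P n.

Lemma P_descent_large n : 1 <= P n -> P n.+1 <= P n - 1.
Proof. by move=> P_ge1; rewrite PS ler_pdivrMr //; nra. Qed.

Lemma P_descent_long n : 1 <= L n -> P n.+1 <= P n - 1.
Proof. by move=> L_ge1; have := P_gt0 n; rewrite PS ler_pdivrMr //; nra. Qed.

Lemma L_nondecreasing : nondecreasing_seq L.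
Proof.
apply/nondecreasing_seqP => n.
by rewrite LS ler_peMr ?lerDl ?invr_ge0 // ltW.
Qed.

Lemma P_lt1_often n : exists2 m, (n <= m)%N & P m < 1.
Proof.
apply: contrapT => no_small; apply: (@no_unit_descent _ n P_gt0) => k nk.
apply: P_descent_large; rewrite leNgt; apply/negP => Pk.
by apply: no_small; exists k.
Qed.

Lemma L_unbounded j : exists n, j%:R * L 0 <= L n.
Proof.
elim: j => [|j [n Ln]]; first by exists 0%N; rewrite mul0r ltW.
have [m nm Pm] := P_lt1_often n.
exists m.+1; rewrite LS -natr1 mulrDl mul1r mulrDr mulr1.
have L0m := L_nondecreasing (leq0n m); have Lnm := L_nondecreasing nm.
have : L m <= L m / P m by rewrite ler_pdivlMr // ger_pMr // ltW.
lra.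
Qed.

Lemma interval_escape : False.
Proof.
have [n Ln_ge1] : exists n, 1 <= L n.
  have [n Ln] := L_unbounded (Num.bound (L 0)^-1); exists n; apply: le_trans Ln.
  rewrite -ler_pdivrMr // div1r ltW // archi_boundP // invr_ge0 ltW //.
apply: (@no_unit_descent _ n P_gt0) => k nk; apply: P_descent_long.
exact: le_trans Ln_ge1 (L_nondecreasing nk).
Qed.

End IntervalEscape.

Lemma mulr_gt0_off_zero (R : realDomainType) (x y : R) :
  x <= y -> ~~ ((x <= 0) && (0 <= y)) -> 0 < x * y.
Proof. by case: (lerP x 0); case: (lerP 0 y) => //= *; nra. Qed.

Section PsiRealMonotone.
Variable R : realFieldType.
Implicit Types x y : R.

Lemma psi_fin_lt x y : 0 < x * y -> x < y -> psi_fin x < psi_fin y.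
Proof.
move=> xy_gt0 lt_xy.
have [x0 y0] : x != 0 /\ y != 0 by split; apply: contraTneq xy_gt0 => ->;
  rewrite ?(mul0r, mulr0) ltxx.
rewrite -subr_gt0 psi_finB // mulr_gt0 ?subr_gt0 //.
by rewrite ltr_pwDr // invr_gt0.
Qed.

Lemma psi_fin_le x y : 0 < x * y -> x <= y -> psi_fin x <= psi_fin y.
Proof.
by move=> xy_gt0; rewrite le_eqVlt => /predU1P[->//|/(psi_fin_lt xy_gt0)/ltW].
Qed.

End PsiRealMonotone.

Lemma psi_fin_preim_itv (R : rcfType) (a b y : R) : 0 < a * b ->
  psi_fin a <= y <= psi_fin b ->
  exists w, [/\ a <= w <= b, w != 0 & psi_fin w = y].
Proof.
move=> ab_gt0 /andP[ay yb].
have between w : 0 < w * a -> 0 < b * w -> psi_fin w = y -> a <= w <= b.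
  move=> wa bw fw; rewrite !leNgt; apply/andP; split; apply/negP.
    by move/(psi_fin_lt wa); rewrite fw; lra.
  by move/(psi_fin_lt bw); rewrite fw; lra.
case: (ltrgt0P a) ab_gt0 => [a_gt0|a_lt0|->]; last by rewrite mul0r ltxx.
- rewrite pmulr_rgt0 // => b_gt0; have w_gt0 := psi_root_pos_gt0 y.
  exists (psi_root_pos y); rewrite gt_eqF // psi_fin_root_pos; split=> //.
  by apply: between; [exact: mulr_gt0 | exact: mulr_gt0 | exact: psi_fin_root_pos].
- rewrite nmulr_rgt0 // => b_lt0; have w_lt0 := psi_root_neg_lt0 y.
  exists (psi_root_neg y); rewrite lt_eqF // psi_fin_root_neg; split=> //.
  by apply: between; rewrite ?nmulr_rgt0 // psi_fin_root_neg.
Qed.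

Lemma iter_psi_fin_meets_zero (R : archiFieldType) (a b : R) : a < b ->
  exists n, iter n psi_fin a <= 0 <= iter n psi_fin b.
Proof.
move=> lt_ab; apply: contrapT => no_zero.
pose A n := iter n psi_fin a; pose B n := iter n psi_fin b.
have off_zero n : ~~ ((A n <= 0) && (0 <= B n)).
  by apply/negP => AB0; apply: no_zero; exists n.
have lt_AB n : A n < B n.
  elim: n => // n IH.
  exact: psi_fin_lt (mulr_gt0_off_zero (ltW IH) (off_zero n)) IH.
have AB_gt0 n : 0 < A n * B n := mulr_gt0_off_zero (ltW (lt_AB n)) (off_zero n).
have AB_neq0 n : A n != 0 /\ B n != 0.
  by have := AB_gt0 n; rewrite lt0r mulf_eq0 negb_or => /andP[/andP[]].
apply: (interval_escape (P := fun n => A n * B n) (L := fun n => B n - A n)) => n /=.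
- exact: AB_gt0.
- by rewrite subr_gt0.
- by have [A0 B0] := AB_neq0 n; rewrite psi_finB.
- by have [A0 B0] := AB_neq0 n; rewrite psi_finM.
Qed.

Lemma Y_between (R : rcfType) n (a b : R) : a <= b ->
  iter n psi_fin a <= 0 <= iter n psi_fin b ->
  exists p, exists2 x, a <= x <= b & Y p (x%:C)%C.
Proof.
elim: n a b => [|n IH] a b le_ab.
  by exists 0%N, 0 => //; apply/Y0/rmorph0.
have [a0b|off_zero] := boolP ((a <= 0) && (0 <= b)).
  by exists 0%N, 0 => //; apply/Y0/rmorph0.
have ab_gt0 := mulr_gt0_off_zero le_ab off_zero.
rewrite !iterSr => /(IH _ _ (psi_fin_le ab_gt0 le_ab))[p [y y_itv Yy]].
have [w [w_itv w0 fw]] := psi_fin_preim_itv ab_gt0 y_itv.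
by exists p.+1, w => //; apply/YS_real; rewrite fw.
Qed.

Theorem proposition3p2 (R : realType) :
  dense [set x : R | exists p : nat, Y p (x%:C)%C]
  /\ (forall p : nat, exists s : seq R,
        uniq s /\ size s = (2 ^ p)%N /\
        (forall z : R[i], Y p z <-> exists2 x, x \in s & z = (x%:C)%C)).
Proof.
split; last first.
  move=> p; exists (psi_zeros R p); split; first exact: psi_zeros_uniq.
  by split; [exact: size_psi_zeros | exact: Y_psi_zeros].
move=> O [r Or]; rewrite openE => /(_ _ Or)/nbhs_ballP[_/posnumP[e] reO].
have lt_rs : r < r + e%:num / 2 by rewrite ltrDl divr_gt0.
have [n meets0] := iter_psi_fin_meets_zero lt_rs.
have [p [x /andP[rx xs] Yx]] := Y_between (ltW lt_rs) meets0.
exists x; split; last by exists p.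
apply: reO; rewrite /ball /= distrC ltr_distl.
have := gt0 e; lra.
Qed.
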